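(* Let $n\geqslant 2$ and let $G$ (gene tree) and $S$ (species tree) be caterpillar trees whose leaves are bijectively labeled by the same set $X$ of $n$ labels, with canonical label vectors $\mathbf g=(g_1,\dots,g_n)$ and $\mathbf s=(s_1,\dots,s_n)$; $G$ and $S$ need not have the same labeled topology. For a label $x$, let $\sigma(x)$ denote the index of $x$ in $\mathbf s$, and for $1\leqslant j\leqslant n-1$ put $F(j)=\max\{\sigma(g_1),\dots,\sigma(g_{j+1})\}-1$. Define the roadblock set $$B_{G,S}=\{(i,j)\in\mathbb Z^2 : 1\leqslant j\leqslant i\leqslant n-1,\ i<F(j)\}.$$ Then there is a bijection between the set of coalescent histories for $(G,S)$ and the set of monotonic lattice paths from $(0,0)$ to $(n-1,n-1)$ that do not cross above the diagonal $y=x$ and that pass through no point of $B_{G,S}$.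
   Context: All trees are binary, rooted and leaf-labeled. A caterpillar tree with $n$ leaves is a tree in which some internal node is descended from all other internal nodes; it has a unique cherry (internal node with exactly two descendant leaves). Its canonical label vector $(x_1,\dots,x_n)$ has $x_1,x_2$ the labels of the two cherry leaves and, for $3\leqslant i\leqslant n$, $x_i$ the label of the leaf separated from the root by $n-i+1$ edges (vectors differing only by swapping $x_1,x_2$ describe the same tree). Internal nodes are numbered $1,\dots,n-1$ from the cherry (node 1) to the root (node $n-1$), so node $i$ has descendant leaves $x_1,\dots,x_{i+1}$; internal edge $i$ is the edge immediately above node $i$, the tree being considered to possess an extra edge above its root (edge $n-1$). A node or edge is considered descended from itself. A coalescent history for $(G,S)$ is a function $h$ from the internal nodes of $G$ to the internal edges of $S$ (including the edge above the root) such that (1) for each internal node $v$ of $G$, every label of a leaf descended from $v$ in $G$ labels a leaf of $S$ descended from edge $h(v)$; and (2) whenever internal node $v_2$ is descended from internal node $v_1$ in $G$, edge $h(v_2)$ is descended from edge $h(v_1)$ in $S$. A monotonic path from $(0,0)$ to $(a,b)$ is a sequence of lattice points starting at $(0,0)$ and ending at $(a,b)$ in which each step adds $(1,0)$ or $(0,1)$; it does not cross above $y=x$ if every point $(x,y)$ on it satisfies $y\leqslant x$. *)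

From mathcomp Require Import all_boot.
Set Implicit Arguments. Unset Strict Implicit. Unset Printing Implicit Defensive.

(* A caterpillar tree on the label set X with n leaves is given by its
   canonical label vector x = (x_1,...,x_n), an n.-tuple of distinct labels.
   Indices in the paper are 1-based; the tuple is 0-based, so x_k = nth _ x (k-1)
   and the 1-based position of label y in x is (index y x).+1.
   Internal nodes and internal edges are numbered 1..n-1 (1-based naturals). *)

Section Caterpillar.
Variable X : finType.

Definition sigma (n : nat) (s : n.-tuple X) (y : X) : nat := (index y s).+1.

(* leaf labeled y is descended from internal node i of caterpillar x
   (node i has descendant leaves x_1..x_{i+1}) *)
Definition leaf_below_node (n : nat) (x : n.-tuple X) (i : nat) (y : X) : bool :=
  sigma x y <= i.+1.

(* leaf labeled y of S is descended from edge i of S (edge i is immediately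
   above node i, so has the same leaves below it; edge n-1 lies above the root) *)
Definition leaf_below_edge (n : nat) (s : n.-tuple X) (i : nat) (y : X) : bool :=
  leaf_below_node s i y.

(* in a caterpillar the internal nodes form a chain: node i is descended
   from node j iff i <= j; likewise for internal edges (edge n-1 is the top) *)
Definition node_desc (i j : nat) : bool := i <= j.
Definition edge_desc (i j : nat) : bool := i <= j.

(* A function from the internal nodes {1..n-1} of G to the internal edges
   {1..n-1} of S, encoded as a finite function on 'I_(n-1): ordinal k stands
   for node/edge k+1. *)
Definition node_of (n : nat) (k : 'I_n.-1) : nat := (val k).+1.

Definition coalescent_history (n : nat) (g s : n.-tuple X)
    (h : {ffun 'I_n.-1 -> 'I_n.-1}) : Prop :=
  (forall v : 'I_n.-1, forall y : X,
      leaf_below_node g (node_of v) y -> leaf_below_edge s (node_of (h v)) y)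
  /\
  (forall v1 v2 : 'I_n.-1, node_desc (node_of v2) (node_of v1) ->
      edge_desc (node_of (h v2)) (node_of (h v1))).

Definition Fmax (n : nat) (g s : n.-tuple X) (j : nat) : nat :=
  (\max_(y <- take j.+1 g) sigma s y) - 1.

Definition roadblock (n : nat) (g s : n.-tuple X) (p : nat * nat) : bool :=
  let: (i, j) := p in [&& 1 <= j, j <= i, i <= n - 1 & i < Fmax g s j].
End Caterpillar.

(* Lattice paths: sequences of lattice points (in N^2, as they are monotone
   from (0,0)). *)
Definition lattice_step (u v : nat * nat) : bool :=
  (v == (u.1.+1, u.2)) || (v == (u.1, u.2.+1)).

Definition monotonic_path (a b : nat) (p : seq (nat * nat)) : bool :=
  match p with
  | [::] => false
  | u :: q => [&& u == (0, 0), path lattice_step u q & last u q == (a, b)]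
  end.

Definition not_above_diagonal (p : seq (nat * nat)) : bool :=
  all (fun u => u.2 <= u.1) p.

Definition good_path (X : finType) (n : nat) (g s : n.-tuple X)
    (p : seq (nat * nat)) : bool :=
  [&& monotonic_path n.-1 n.-1 p, not_above_diagonal p
    & all (fun u => ~~ roadblock g s u) p].

(* A coalescent history h of caterpillars is determined by the sequence
   c_j = h(j) of species-tree edges receiving the gene-tree nodes j = 1..n-1,
   and condition (1) for node j says exactly c_j >= F(j), so the histories are
   the nondecreasing sequences with c_j >= F(j). Reading c_j as the column at
   which a lattice path climbs from row j-1 to row j turns such a sequence into
   a monotonic path from (0,0) to (n-1,n-1), and every such path arises this
   way from the columns of its up-steps. Staying weakly below the diagonal and
   avoiding B_{G,S} are both preserved by moving right along a row, so a path
   is good iff its corners (c_j, j) are, and at a corner this is again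
   c_j >= F(j), the diagonal condition c_j >= j following from F(j) >= j by
   the pigeonhole principle. *)

From mathcomp Require Import all_boot zify.
From Stdlib Require Import ProofIrrelevance.

Set Implicit Arguments.
Unset Strict Implicit.
Unset Printing Implicit Defensive.

Definition row_run (x c y : nat) : seq (nat * nat) :=
  [seq (k, y) | k <- iota x.+1 (c - x)].

Fixpoint staircase (u : nat * nat) (cs : seq nat) (t : nat) : seq (nat * nat) :=
  if cs is c :: cs' then
    row_run u.1 c u.2 ++ (c, u.2.+1) :: staircase (c, u.2.+1) cs' t
  else row_run u.1 t u.2.

Fixpoint up_columns (u : nat * nat) (q : seq (nat * nat)) : seq nat :=
  if q is v :: q' then
    if v.2 == u.2.+1 then v.1 :: up_columns v q' else up_columns v q'
  else [::].

Definition corners (u : nat * nat) (cs : seq nat) : seq (nat * nat) :=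
  u :: zip cs (iota u.2.+1 (size cs)).

Lemma row_run_nil x c y : c <= x -> row_run x c y = [::].
Proof. by rewrite -subn_eq0 /row_run => /eqP ->. Qed.

Lemma row_run_cons x c y : x < c -> row_run x c y = (x.+1, y) :: row_run x.+1 c y.
Proof. by move=> lt_xc; rewrite /row_run -subnSK. Qed.

Lemma row_run_lattice x c y : x <= c ->
  path lattice_step (x, y) (row_run x c y) && (last (x, y) (row_run x c y) == (c, y)).
Proof.
move=> le_xc; rewrite -(subnKC le_xc); move: (c - x) => d.
elim: d x {le_xc} => [|d IHd] x; first by rewrite addn0 row_run_nil //= eqxx.
by rewrite row_run_cons ?addnS ?ltnS ?leq_addr //= -addSn /lattice_step eqxx IHd.
Qed.

Lemma staircase_lattice u cs t : path leq u.1 (rcons cs t) ->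
  path lattice_step u (staircase u cs t) &&
  (last u (staircase u cs t) == (t, u.2 + size cs)).
Proof.
elim: cs u => [|c cs IHcs] [x y] /=; first by rewrite andbT addn0; apply: row_run_lattice.
case/andP=> le_xc /(IHcs (c, y.+1)) /andP[st_path /eqP st_last].
have /andP[run_path /eqP run_last] := row_run_lattice y le_xc.
rewrite cat_path last_cat run_path run_last /= /lattice_step !eqxx orbT st_path st_last.
by rewrite /= addSnnS.
Qed.

Lemma staircase_shift u cs t : u.1 < head t cs ->
  staircase u cs t = (u.1.+1, u.2) :: staircase (u.1.+1, u.2) cs t.
Proof. by case: cs => [|c cs] /= lt_head; rewrite row_run_cons. Qed.

Lemma up_columns_same_row u v q : u.2 = v.2 -> up_columns u q = up_columns v q.
Proof. by case: q => //= w q ->. Qed.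

Lemma up_columns_row_run u x c q :
  up_columns u (row_run x c u.2 ++ q) = up_columns u q.
Proof.
rewrite /row_run; elim: (iota _ _) => [|k r IHr] //=.
by rewrite (ltn_eqF (ltnSn u.2)) (@up_columns_same_row (k, u.2) u).
Qed.

Lemma up_columns_staircase u cs t : up_columns u (staircase u cs t) = cs.
Proof.
elim: cs u => [|c cs IHcs] u /=.
  by rewrite -[row_run _ _ _]cats0 up_columns_row_run.
by rewrite up_columns_row_run /= eqxx IHcs.
Qed.

Lemma up_columns_path u q : path lattice_step u q ->
  path leq u.1 (rcons (up_columns u q) (last u q).1).
Proof.
elim: q u => [|v q IHq] [x y] /=; first by rewrite leqnn.
case/andP=> /orP[] /eqP -> /IHq /=; last by rewrite eqxx /= leqnn.
by rewrite (ltn_eqF (ltnSn y)); apply: (path_le leq_trans (leqnSn x)).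
Qed.

Lemma size_up_columns u q : path lattice_step u q ->
  u.2 + size (up_columns u q) = (last u q).2.
Proof.
elim: q u => [|v q IHq] [x y] /=; first by rewrite addn0.
case/andP=> /orP[] /eqP -> /IHq /= <-; first by rewrite (ltn_eqF (ltnSn y)).
by rewrite eqxx /= addnS.
Qed.

Lemma staircase_up_columns u q : path lattice_step u q ->
  staircase u (up_columns u q) (last u q).1 = q.
Proof.
elim: q u => [|v q IHq] [x y] /=; first by rewrite row_run_nil.
case/andP=> /orP[] /eqP -> q_path /=; last by rewrite eqxx /= row_run_nil // IHq.
rewrite (ltn_eqF (ltnSn y)) staircase_shift ?IHq //.
by case: (up_columns _ q) (up_columns_path q_path) => [|c cs] /= /andP[].
Qed.

Lemma corners_not_above_diagonal u cs :
  not_above_diagonal (corners u cs) -> all (leq u.2.+1) cs.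
Proof.
elim: cs u => [|c cs IHcs] u //= /andP[_ diag_cs].
have /andP[le_uc _] := diag_cs; have le_cs := IHcs (c, u.2.+1) diag_cs.
by rewrite le_uc; apply: sub_all le_cs => c'; apply: ltnW.
Qed.

Lemma path_leq_rcons a b cs : path leq a (rcons cs b) =
  [&& a <= b, all (leq a) cs, all (leq^~ b) cs & sorted leq cs].
Proof.
rewrite -[path _ _ _]/(sorted leq (a :: rcons cs b)).
by rewrite !(sorted_pairwise leq_trans) /= pairwise_rcons all_rcons -!andbA.
Qed.

Section RowClosedPredicate.
Variable P : pred (nat * nat).
Hypothesis P_right : forall x x' y, x <= x' -> P (x, y) -> P (x', y).

Lemma all_row_run x c y : P (x, y) -> all P (row_run x c y).
Proof.
move=> Pxy; rewrite all_map; apply/allP => k; rewrite mem_iota => /andP[lt_xk _].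
exact: P_right (ltnW lt_xk) Pxy.
Qed.

Lemma all_staircase u cs t : all P (u :: staircase u cs t) = all P (corners u cs).
Proof.
elim: cs u => [|c cs IHcs] [x y] /=.
  by case Pxy: (P (x, y)); rewrite // all_row_run.
rewrite all_cat -/(all P ((c, y.+1) :: _)) IHcs.
by case Pxy: (P (x, y)); rewrite // all_row_run.
Qed.

End RowClosedPredicate.

Section Histories.
Variables (X : finType) (n : nat) (g s : n.-tuple X).

Lemma leaf_below_nodeE (x : n.-tuple X) j y :
  j < n -> leaf_below_node x j y = (y \in take j.+1 x).
Proof. by move=> lt_jn; rewrite in_take_leq // size_tuple. Qed.

Lemma leaf_condition_Fmax j e : j < n ->
  (forall y, leaf_below_node g j y -> leaf_below_edge s e y) <-> Fmax g s j <= e.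
Proof.
move=> lt_jn; rewrite /Fmax leq_subLR add1n; split=> [below | le_max y].
  by apply/bigmax_leqP_seq => y y_g _; apply: below; rewrite leaf_below_nodeE.
rewrite leaf_below_nodeE // => y_g; apply: leq_trans le_max; exact: leq_bigmax_seq.
Qed.

Lemma size_le_max_sigma (r : seq X) :
  uniq r -> {subset r <= s} -> size r <= \max_(y <- r) sigma s y.
Proof.
move=> r_uniq r_sub_s; rewrite -(size_map (sigma s)) -[X in _ <= X](size_iota 1).
apply: uniq_leq_size => [|_ /mapP[y y_r ->]].
  rewrite map_inj_in_uniq // => y y' y_r y'_r [].
  exact: index_inj (r_sub_s y y_r) (r_sub_s y' y'_r).
by rewrite mem_iota add1n ltnS /sigma /= leq_bigmax_seq.
Qed.

Definition admissible : pred (nat * nat) :=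
  predI (fun u => u.2 <= u.1) (fun u => ~~ roadblock g s u).

Lemma admissible_right x x' y : x <= x' -> admissible (x, y) -> admissible (x', y).
Proof. by rewrite /admissible /roadblock /= => le_xx' /andP[le_yx]; lia. Qed.

Definition good_columns (cs : seq nat) : bool :=
  path leq 0 (rcons cs n.-1) && all admissible (corners (0, 0) cs).

Lemma good_pathE p : good_path g s p = monotonic_path n.-1 n.-1 p && all admissible p.
Proof. by rewrite /good_path all_predI andbA. Qed.

Lemma good_path_staircase cs : size cs = n.-1 -> good_columns cs ->
  good_path g s ((0, 0) :: staircase (0, 0) cs n.-1).
Proof.
move=> size_cs /andP[cs_path cs_adm].
have /andP[st_path /eqP st_last] := staircase_lattice (u := (0, 0)) cs_path.
rewrite good_pathE all_staircase ?cs_adm ?andbT; last exact: admissible_right.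
by rewrite /= st_path st_last add0n size_cs eqxx.
Qed.

Lemma good_path_staircase_inv p : good_path g s p ->
  exists2 cs, size cs = n.-1 /\ good_columns cs & p = (0, 0) :: staircase (0, 0) cs n.-1.
Proof.
case: p => [|u q] //; rewrite good_pathE.
case/andP=> /and3P[/eqP -> q_path /eqP q_last] q_adm.
have q_eq := staircase_up_columns q_path; rewrite q_last /= in q_eq.
exists (up_columns (0, 0) q); last by rewrite q_eq.
split; first by have := size_up_columns q_path; rewrite q_last add0n.
rewrite /good_columns -(@all_staircase _ _ _ _ n.-1) ?q_eq ?q_adm ?andbT.
  by have := up_columns_path q_path; rewrite q_last.
exact: admissible_right.
Qed.

(* Row j = i.+1 of the path climbs at column node_of (h i), the edge receiving node j. *)
Definition history_columns (h : {ffun 'I_n.-1 -> 'I_n.-1}) : seq nat :=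
  [seq (h i).+1 | i <- enum 'I_n.-1].

Lemma size_history_columns h : size (history_columns h) = n.-1.
Proof. by rewrite size_map size_enum_ord. Qed.

Lemma nth_history_columns h (i : 'I_n.-1) : nth 0 (history_columns h) i = (h i).+1.
Proof. by rewrite (nth_map i) ?size_enum_ord // nth_ord_enum. Qed.

Lemma history_columns_inj : injective history_columns.
Proof.
move=> h h' /eq_in_map eq_hh'; apply/ffunP => i; apply/val_inj/succn_inj.
exact: eq_hh' (mem_enum _ i).
Qed.

Lemma history_columns_onto cs : size cs = n.-1 ->
  all (leq 1) cs -> all (leq^~ n.-1) cs -> exists h, history_columns h = cs.
Proof.
move=> size_cs cs_pos cs_le; exists [ffun i : 'I_n.-1 => insubd i (nth 0 cs i).-1].
apply: (@eq_from_nth _ 0) => [|i]; rewrite size_history_columns ?size_cs // => lt_i.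
have cs_i : nth 0 cs i \in cs by rewrite mem_nth ?size_cs.
have := allP cs_pos _ cs_i; have := allP cs_le _ cs_i.
rewrite (nth_history_columns _ (Ordinal lt_i)) ffunE val_insubd /=.
by case: ifP; lia.
Qed.

Lemma corners_history_columns h : corners (0, 0) (history_columns h) =
  (0, 0) :: [seq ((h i).+1, i.+1) | i <- enum 'I_n.-1].
Proof.
rewrite /corners size_history_columns /= -[iota 1 _]/(iota (1 + 0) _) iotaDl.
by rewrite -val_enum_ord -map_comp zip_map.
Qed.

Lemma sorted_history_columns h :
  sorted leq (history_columns h) <-> {homo h : i j / i <= j}.
Proof.
split=> [sorted_h i j le_ij | homo_h].
  have := sorted_leq_nth leq_trans leqnn 0 sorted_h.
  rewrite size_history_columns => /(_ i j (ltn_ord i) (ltn_ord j) le_ij).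
  by rewrite !nth_history_columns.
have enum_sorted : sorted (relpre val leq) (enum 'I_n.-1).
  by rewrite -sorted_map val_enum_ord iota_sorted.
exact: homo_sorted enum_sorted.
Qed.

Hypotheses (g_uniq : uniq g) (g_sub_s : {subset g <= s}).

Lemma Fmax_ge j : j < n -> j <= Fmax g s j.
Proof.
move=> lt_jn; have take_sub_s : {subset take j.+1 g <= s}.
  by move=> y /mem_take; apply: g_sub_s.
have := size_le_max_sigma (take_uniq j.+1 g_uniq) take_sub_s.
by rewrite size_takel ?size_tuple // /Fmax; set M := \max_(_ <- _) _; lia.
Qed.

Lemma admissible_corner c j :
  0 < j < n -> c <= n.-1 -> admissible (c, j) = (Fmax g s j <= c).
Proof.
move=> /andP[j_gt0 lt_jn] le_c; have := Fmax_ge lt_jn.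
by rewrite /admissible /roadblock /=; lia.
Qed.

Lemma coalescent_historyE h :
  coalescent_history g s h <-> good_columns (history_columns h).
Proof.
have cols_ge0 : all (leq 0) (history_columns h) by apply/allP.
have cols_le : all (leq^~ n.-1) (history_columns h).
  by apply/allP => _ /mapP[i _ ->]; apply: ltn_ord.
have node_lt (i : 'I_n.-1) : i.+1 < n by rewrite -ltn_predRL.
have corner_i (i : 'I_n.-1) : admissible ((h i).+1, i.+1) = (Fmax g s i.+1 <= (h i).+1).
  by rewrite admissible_corner ?node_lt.
rewrite /good_columns path_leq_rcons cols_ge0 cols_le corners_history_columns /=.
rewrite all_map; split=> [[leaf_h desc_h] | /andP[sorted_h adm_h]].
  apply/andP; split; first by apply/sorted_history_columns => i j; apply: desc_h.
  apply/allP => i _; rewrite /= corner_i.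
  exact: (leaf_condition_Fmax _ (node_lt i)).1 (leaf_h i).
split=> [v | v1 v2]; last exact: (sorted_history_columns h).1.
apply: (leaf_condition_Fmax _ (node_lt v)).2.
by rewrite -corner_i; apply: (allP adm_h _ (mem_enum _ v)).
Qed.

End Histories.

Theorem proposition1 (X : finType) (n : nat) (g s : n.-tuple X) :
  2 <= n -> #|X| = n -> uniq g -> uniq s ->
  exists f : {h : {ffun 'I_n.-1 -> 'I_n.-1} | coalescent_history g s h} ->
             seq (nat * nat),
    injective f /\
    (forall p : seq (nat * nat), good_path g s p <-> exists h, f h = p).
Proof.
move=> _ card_X g_uniq s_uniq.
have size_enum_le : size (enum X) <= size s by rewrite -cardT card_X size_tuple.
have [_ s_full] := uniq_min_size s_uniq (fun y _ => mem_enum X y) size_enum_le.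
have g_sub_s : {subset g <= s} by move=> y _; rewrite s_full mem_enum.
pose f (hh : {h | coalescent_history g s h}) :=
  (0, 0) :: staircase (0, 0) (history_columns (sval hh)) n.-1.
exists f; split.
  move=> [h h_hist] [h' h'_hist] [/(congr1 (up_columns (0, 0)))].
  rewrite !up_columns_staircase => /history_columns_inj eq_hh'; subst h'.
  by rewrite (proof_irrelevance _ h_hist h'_hist).
move=> p; split; last first.
  case=> [[h h_hist] <-]; apply: good_path_staircase; first exact: size_history_columns.
  exact/coalescent_historyE.
case/good_path_staircase_inv => cs [size_cs good_cs] ->.
have /andP[cs_path cs_adm] := good_cs.
move: cs_path; rewrite path_leq_rcons => /and4P[_ _ cs_le _].
have cs_pos : all (leq 1) cs.
  apply: (corners_not_above_diagonal (u := (0, 0))).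
  by apply: sub_all cs_adm => u /andP[].
have [h h_cols] := history_columns_onto size_cs cs_pos cs_le.
have h_hist : coalescent_history g s h by apply/coalescent_historyE; rewrite ?h_cols.
by exists (exist _ h h_hist); rewrite /f /= h_cols.
Qed.
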